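(* Let $\mu$ be a probability measure on $\partial\mathbb{D}$ and $\{\Phi_n\}_{n=0}^N$ its monic orthogonal polynomials, where $N=\infty$ if $\mu$ has infinite support and $N=\#\mathrm{supp}(\mu)$ otherwise. Let $z_0$ be an isolated point of $\mathrm{supp}(\mu)$ and $d=\mathrm{dist}(z_0,\mathrm{supp}(\mu)\setminus\{z_0\})$. Then for each $n<N$, the disk $\{z:|z-z_0|<d^2/4\}$ contains at most one zero of $\Phi_n$.
   Context: $\Phi_n$ is the monic polynomial of degree $n$ orthogonal in $L^2(\mu)$ to all polynomials of degree less than $n$. *)

From HB Require Import structures.
From mathcomp Require Import all_boot all_order all_algebra.
From mathcomp Require Import all_classical all_reals all_analysis.
From mathcomp Require Import complex.
Set Implicit Arguments. Unset Strict Implicit. Unset Printing Implicit Defensive.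
Import Order.TTheory GRing.Theory Num.Theory.
Local Open Scope classical_set_scope.
Local Open Scope ring_scope.

Section OPUC.
Variable R : realType.

(* Points of the plane R^2 = C carry the product (Borel) sigma-algebra. *)
Definition toC (p : R * R) : R[i] := Complex p.1 p.2.

Definition cabs (z : R[i]) : R := Num.sqrt (complex.Re z ^+ 2 + complex.Im z ^+ 2).
Definition pdist (p q : R * R) : R := cabs (toC p - toC q).

Definition unit_circle : set (R * R) := [set p | p.1 ^+ 2 + p.2 ^+ 2 = 1].

Definition msupp (mu : set (R * R) -> \bar R) : set (R * R) :=
  [set z | forall r : R, 0 < r -> (0 < mu [set w | (pdist w z < r)%R])%E].

Definition L2ip (mu : {measure set (R * R) -> \bar R}) (f g : {poly R[i]})
    : \bar R * \bar R :=
  ((\int[mu]_(z in unit_circle) (complex.Re (f.[toC z] * conjc g.[toC z]))%:E)%E,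
   (\int[mu]_(z in unit_circle) (complex.Im (f.[toC z] * conjc g.[toC z]))%:E)%E).

Definition monic_OP (mu : {measure set (R * R) -> \bar R}) (n : nat) (P : {poly R[i]}) :=
  [/\ P \is monic, size P = n.+1 &
      forall q : {poly R[i]}, (size q <= n)%N -> L2ip mu P q = (0%E, 0%E)].

(* n < N, where N = infinity if the support S is infinite, N = #S otherwise *)
Definition lt_N (S : set (R * R)) (n : nat) :=
  ~ finite_set S \/ exists s : seq (R * R), [/\ uniq s, [set` s] = S & (n < size s)%N].

Definition isolated_pt (S : set (R * R)) (z0 : R * R) :=
  S z0 /\ exists r : R, 0 < r /\ forall w, S w -> pdist w z0 < r -> w = z0.

Definition dist_rest (S : set (R * R)) (z0 : R * R) : R :=
  inf [set pdist w z0 | w in S `\ z0].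

End OPUC.

(* Let c = z0, which lies on the unit circle because the support does, and U = 'X - c.
   For z on the circle Re (conj c (z - c)) = -|z - c|^2/2, so
   Re (conj c <U f, f>) = -1/2 \int |z - c|^2 |f|^2 dmu is <= 0 for every f, and it is
   <= -(d^2/2) ||f||^2 when f vanishes at c, since mu-almost every point of the circle
   other than c lies at distance >= d from c.  Suppose Phi_n = r (X - a) (X - b) and put
   alpha = a - c, beta = b - c, e = U r.  Orthogonality of Phi_n to lower degrees gives
   <U e, e> = (alpha + beta) ||e||^2 - alpha beta <r, e>, and the first inequality applied
   to the component of r orthogonal to e gives Re (conj c alpha beta <r, e>) <= 0.  Hence
   Re (conj c <U e, e>) >= -(|alpha| + |beta|) ||e||^2 > -(d^2/2) ||e||^2, contradicting
   the second inequality. *)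

From HB Require Import structures.
From mathcomp Require Import all_boot all_order all_algebra.
From mathcomp Require Import all_classical all_reals all_analysis.
From mathcomp Require Import complex.
From mathcomp Require Import ring lra zify.
Import Order.TTheory GRing.Theory Num.Theory.
Set Implicit Arguments. Unset Strict Implicit.
Local Open Scope classical_set_scope.
Local Open Scope ring_scope.
Local Open Scope complex_scope.

Section ComplexModulus.
Variable R : realType.
Implicit Types x y : R[i].
Local Notation Re := (@complex.Re R).
Local Notation Im := (@complex.Im R).

Lemma cabsE x : (cabs x)%:C = `|x|.
Proof. by rewrite normc_def. Qed.

Lemma cabs_ge0 x : 0 <= cabs x.
Proof. exact: sqrtr_ge0. Qed.

Lemma cabs_eq0 x : (cabs x == 0) = (x == 0).
Proof. by rewrite -(inj_eq (@complexI R)) cabsE normr_eq0. Qed.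

Lemma cabsM x y : cabs (x * y) = cabs x * cabs y.
Proof. by apply: (@complexI R); rewrite rmorphM /= !cabsE normrM. Qed.

Lemma cabsD x y : cabs (x + y) <= cabs x + cabs y.
Proof. by rewrite -lecR rmorphD /= !cabsE ler_normD. Qed.

Lemma cabsB x y : cabs (x - y) = cabs (y - x).
Proof. by apply: (@complexI R); rewrite !cabsE distrC. Qed.

Lemma cabs_dist x y : `|cabs x - cabs y| <= cabs (x - y).
Proof.
have := cabsD (x - y) y; have := cabsD (y - x) x; rewrite !subrK cabsB.
by rewrite ler_norml => ? ?; apply/andP; split; lra.
Qed.

Lemma cabsJ x : cabs x^* = cabs x.
Proof. by apply: (@complexI R); rewrite !cabsE normcJ. Qed.

Lemma mulcJ_cabs x : x * x^* = (cabs x ^+ 2)%:C.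
Proof. by rewrite rmorphXn /= cabsE sqr_normc. Qed.

Lemma Re_le_cabs x : `|Re x| <= cabs x.
Proof. by rewrite -sqrtr_sqr ler_sqrt ?lerDl ?sqr_ge0 // addr_ge0 ?sqr_ge0. Qed.

Lemma Im_le_cabs x : `|Im x| <= cabs x.
Proof. by rewrite -sqrtr_sqr ler_sqrt ?lerDr ?sqr_ge0 // addr_ge0 ?sqr_ge0. Qed.

Lemma cabs_le_ReIm x : cabs x <= `|Re x| + `|Im x|.
Proof.
rewrite -[leRHS]ger0_norm ?addr_ge0 // -sqrtr_sqr ler_sqrt ?sqr_ge0 //.
by rewrite sqrrD !real_normK ?num_real // lerD2r lerDl mulrn_wge0 // mulr_ge0.
Qed.

Lemma Re_addc x y : Re (x + y) = Re x + Re y. Proof. by case: x; case: y. Qed.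
Lemma Im_addc x y : Im (x + y) = Im x + Im y. Proof. by case: x; case: y. Qed.
Lemma Re_subc x y : Re (x - y) = Re x - Re y. Proof. by case: x; case: y. Qed.
Lemma Re_mulc x y : Re (x * y) = Re x * Re y - Im x * Im y.
Proof. by case: x; case: y. Qed.
Lemma Im_mulc x y : Im (x * y) = Re x * Im y + Im x * Re y.
Proof. by case: x; case: y. Qed.
Lemma Re_mul_real x (k : R) : Re (x * k%:C) = Re x * k.
Proof. by case: x => a b /=; rewrite mulr0 subr0. Qed.
Lemma Re_conjc x : Re x^* = Re x. Proof. by case: x. Qed.
Lemma Im_conjc x : Im x^* = - Im x. Proof. by case: x. Qed.

End ComplexModulus.

Section PlaneGeometry.
Variable R : realType.
Local Notation T := (R * R)%type.
Implicit Types w z : T.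

Lemma toC_inj : injective (@toC R).
Proof. by move=> [a b] [c e] [-> ->]. Qed.

Lemma pdist_ge0 w z : 0 <= pdist w z.
Proof. exact: cabs_ge0. Qed.

Lemma pdistC w z : pdist w z = pdist z w.
Proof. exact: cabsB. Qed.

Lemma pdist_triangle u v w : pdist u w <= pdist u v + pdist v w.
Proof. by rewrite /pdist -[toC u - toC w](subrKA (toC v)) cabsD. Qed.

Lemma sqr_pdist w z : pdist w z ^+ 2 = (w.1 - z.1) ^+ 2 + (w.2 - z.2) ^+ 2.
Proof. by rewrite sqr_sqrtr // addr_ge0 ?sqr_ge0. Qed.

Lemma measurable_sqr_pdist z : measurable_fun setT (fun w : T => pdist w z ^+ 2).
Proof.
have -> : (fun w : T => pdist w z ^+ 2) = fun w => (w.1 - z.1) ^+ 2 + (w.2 - z.2) ^+ 2.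
  by apply/funext => w; rewrite sqr_pdist.
by apply: measurable_realfun.measurable_funD; apply: measurable_realfun.measurable_funX;
  apply: measurable_realfun.measurable_funB => //;
  (exact: measurable_fst || exact: measurable_snd).
Qed.

Lemma measurable_disk z r : measurable [set w : T | pdist w z < r].
Proof.
have [r_gt0|r_le0] := ltP 0 r; last first.
  suff -> : [set w : T | pdist w z < r] = set0 by [].
  by apply/seteqP; split => // w /= /lt_le_trans/(_ r_le0); rewrite ltNge pdist_ge0.
suff -> : [set w : T | pdist w z < r] = (fun w => pdist w z ^+ 2) @^-1` `]-oo, r ^+ 2[.
  by rewrite -[X in measurable X]setTI; exact: measurable_sqr_pdist.
apply/seteqP; split => w /=; rewrite in_itv /= ltr_pXn2r ?nnegrE ?pdist_ge0 //; exact: ltW.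
Qed.

Lemma measurable_unit_circle : measurable (@unit_circle R).
Proof.
have m : measurable_fun setT (fun p : T => p.1 ^+ 2 + p.2 ^+ 2).
  by apply: measurable_realfun.measurable_funD; apply: measurable_realfun.measurable_funX;
    (exact: measurable_fst || exact: measurable_snd).
by have := m measurableT [set 1] (measurable_set1 1); rewrite setTI.
Qed.

Lemma unit_circleE z : unit_circle z <-> cabs (toC z) = 1.
Proof.
rewrite /unit_circle /cabs /=; split => [->|z1]; first exact: sqrtr1.
by rewrite -[LHS]sqr_sqrtr ?z1 ?expr1n // addr_ge0 ?sqr_ge0.
Qed.

Lemma dist_rest_ge0 (S : set T) z0 : 0 <= dist_rest S z0.
Proof.
rewrite /dist_rest; have [ne|S0] := pselect ([set pdist w z0 | w in S `\ z0] !=set0).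
  by apply: lb_le_inf ne _ => _ [v _ <-]; exact: pdist_ge0.
suff -> : [set pdist w z0 | w in S `\ z0] = set0 by rewrite inf0.
by apply/seteqP; split => // y Sy; apply: S0; exists y.
Qed.

Lemma dist_rest_le (S : set T) z0 w : S w -> w <> z0 -> dist_rest S z0 <= pdist w z0.
Proof.
move=> Sw wz0; apply: ge_inf; last by exists w => //; split => // /= wz; exact: wz0.
by exists 0 => _ [v _ <-]; exact: pdist_ge0.
Qed.

(* On the unit circle, [|z - c|^2 = 2 - 2 Re (conj c z)]. *)
Lemma Re_conj_sub_unit_circle z c : unit_circle z -> unit_circle c ->
  complex.Re ((toC c)^* * (toC z - toC c)) = - (pdist z c ^+ 2 / 2).
Proof.
rewrite sqr_pdist /unit_circle; case: z => x y; case: c => a b /= hz hc.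
have -> : a * (x - a) - - b * (y - b) = (a * x + b * y) - (a ^+ 2 + b ^+ 2) by ring.
have -> : (x - a) ^+ 2 + (y - b) ^+ 2 = (x ^+ 2 + y ^+ 2) + (a ^+ 2 + b ^+ 2) - 2 * (a * x + b * y).
  by ring.
by rewrite hz hc; field.
Qed.

End PlaneGeometry.

Arguments measurable_unit_circle {R}.

Section CircleIntegral.
Variable R : realType.
Variable mu : {finite_measure set (R * R)%type -> \bar R}.
Local Notation T := (R * R)%type.
Local Notation Re := (@complex.Re R).
Local Notation Im := (@complex.Im R).
Local Notation circ := (@unit_circle R).
Local Notation Rint g := (Rintegral mu circ g).
Implicit Types (F G : T -> R[i]) (p q : {poly R[i]}).

Definition circ_integrand F :=
  [/\ measurable_fun setT (fun z => Re (F z)), measurable_fun setT (fun z => Im (F z)) &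
      exists M, forall z, circ z -> cabs (F z) <= M].

Lemma circ_integrand_cst c : circ_integrand (fun=> c).
Proof. by split; [exact: measurable_cst|exact: measurable_cst|exists (cabs c)]. Qed.

Lemma circ_integrand_toC : circ_integrand (@toC R).
Proof.
split; [exact: measurable_fst|exact: measurable_snd|].
by exists 1 => z /unit_circleE ->.
Qed.

Lemma circ_integrandD F G :
  circ_integrand F -> circ_integrand G -> circ_integrand (fun z => F z + G z).
Proof.
move=> [mF1 mF2 [M FM]] [mG1 mG2 [N GN]]; split.
- under eq_fun do rewrite Re_addc; exact: measurable_realfun.measurable_funD.
- under eq_fun do rewrite Im_addc; exact: measurable_realfun.measurable_funD.
- by exists (M + N) => z cz; exact: le_trans (cabsD _ _) (lerD (FM z cz) (GN z cz)).
Qed.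

Lemma circ_integrandM F G :
  circ_integrand F -> circ_integrand G -> circ_integrand (fun z => F z * G z).
Proof.
move=> [mF1 mF2 [M FM]] [mG1 mG2 [N GN]]; split.
- under eq_fun do rewrite Re_mulc.
  by apply: measurable_realfun.measurable_funB; exact: measurable_realfun.measurable_funM.
- under eq_fun do rewrite Im_mulc.
  by apply: measurable_realfun.measurable_funD; exact: measurable_realfun.measurable_funM.
- exists (M * N) => z cz; rewrite cabsM.
  by apply: ler_pM (FM z cz) (GN z cz); exact: cabs_ge0.
Qed.

Lemma circ_integrandJ F : circ_integrand F -> circ_integrand (fun z => (F z)^*).
Proof.
move=> [mF1 mF2 [M FM]]; split.
- by under eq_fun do rewrite Re_conjc.
- under eq_fun do rewrite Im_conjc; exact: measurable_realfun.measurable_funN.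
- by exists M => z cz; rewrite cabsJ; exact: FM.
Qed.

Lemma circ_integrand_horner p : circ_integrand (fun z => p.[toC z]).
Proof.
elim/poly_ind: p => [|p c IH].
  by under eq_fun do rewrite horner0; exact: circ_integrand_cst.
under eq_fun do rewrite hornerMXaddC.
apply: circ_integrandD (circ_integrand_cst c).
exact: circ_integrandM IH circ_integrand_toC.
Qed.

Lemma circ_integrand_ip p q : circ_integrand (fun z => p.[toC z] * q.[toC z]^*).
Proof.
apply: circ_integrandM (circ_integrand_horner p) _.
exact: circ_integrandJ (circ_integrand_horner q).
Qed.

Lemma bounded_integrable_unit_circle (g : T -> R) : measurable_fun setT g ->
  (exists M, forall z, circ z -> `|g z| <= M) -> mu.-integrable circ (EFin \o g).
Proof.
move=> mg [M gM]; apply: measurable_bounded_integrable.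
- exact: measurable_unit_circle.
- by rewrite ltey_eq fin_num_measure //; exact: measurable_unit_circle.
- exact: measurable_funS mg.
- exists M; split; first exact: num_real.
  by move=> N /ltW MN z cz; exact: le_trans (gM z cz) MN.
Qed.

Lemma integrable_Re F : circ_integrand F -> mu.-integrable circ (EFin \o (fun z => Re (F z))).
Proof.
move=> [mF _ [M FM]]; apply: bounded_integrable_unit_circle mF _.
by exists M => z cz; exact: le_trans (Re_le_cabs _) (FM z cz).
Qed.

Lemma integrable_Im F : circ_integrand F -> mu.-integrable circ (EFin \o (fun z => Im (F z))).
Proof.
move=> [_ mF [M FM]]; apply: bounded_integrable_unit_circle mF _.
by exists M => z cz; exact: le_trans (Im_le_cabs _) (FM z cz).
Qed.

Lemma integrable_scale k (g : T -> R) : mu.-integrable circ (EFin \o g) ->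
  mu.-integrable circ (EFin \o (fun z => k * g z)).
Proof.
move=> ig; have := integrableZl measurable_unit_circle k ig.
by apply: (eq_integrable measurable_unit_circle) => z _ /=; rewrite EFinM.
Qed.

Definition cint F : R[i] := Rint (fun z => Re (F z)) +i* Rint (fun z => Im (F z)).

Lemma cintD F G : circ_integrand F -> circ_integrand G ->
  cint (fun z => F z + G z) = cint F + cint G.
Proof.
move=> iF iG; apply/eqP; rewrite eq_complex /=; apply/andP; split; apply/eqP.
- under eq_fun do rewrite Re_addc.
  exact: RintegralD measurable_unit_circle (integrable_Re iF) (integrable_Re iG).
- under eq_fun do rewrite Im_addc.
  exact: RintegralD measurable_unit_circle (integrable_Im iF) (integrable_Im iG).
Qed.

Lemma cintZ c F : circ_integrand F -> cint (fun z => c * F z) = c * cint F.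
Proof.
move=> iF; have mc := @measurable_unit_circle R.
have [iRe iIm] := (integrable_Re iF, integrable_Im iF).
case: c => a b; apply/eqP; rewrite eq_complex /=; apply/andP; split; apply/eqP.
- under eq_fun do rewrite Re_mulc /=.
  by rewrite (RintegralB mc (integrable_scale a iRe) (integrable_scale b iIm)) !RintegralZl.
- under eq_fun do rewrite Im_mulc /=.
  by rewrite (RintegralD mc (integrable_scale a iIm) (integrable_scale b iRe)) !RintegralZl.
Qed.

Lemma cintJ F : circ_integrand F -> cint (fun z => (F z)^*) = (cint F)^*.
Proof.
move=> iF; apply/eqP; rewrite eq_complex /=; apply/andP; split; apply/eqP.
- by under eq_fun do rewrite Re_conjc.
- under eq_fun do rewrite Im_conjc -mulN1r.
  by rewrite RintegralZl ?mulN1r //; [exact: measurable_unit_circle|exact: integrable_Im].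
Qed.

Definition ip p q : R[i] := cint (fun z => p.[toC z] * q.[toC z]^*).

Lemma ipDl p1 p2 q : ip (p1 + p2) q = ip p1 q + ip p2 q.
Proof.
rewrite /ip -(cintD (circ_integrand_ip p1 q) (circ_integrand_ip p2 q)).
by under eq_fun do rewrite hornerD mulrDl.
Qed.

Lemma ipZl c p q : ip (c%:P * p) q = c * ip p q.
Proof.
rewrite /ip -(cintZ c (circ_integrand_ip p q)).
by under eq_fun do rewrite hornerCM -mulrA.
Qed.

Lemma ipBl p1 p2 q : ip (p1 - p2) q = ip p1 q - ip p2 q.
Proof. by rewrite ipDl -mulN1r -polyCN ipZl mulN1r. Qed.

Lemma ipC p q : ip q p = (ip p q)^*.
Proof.
rewrite /ip -(cintJ (circ_integrand_ip p q)).
by congr cint; apply/funext => z; rewrite rmorphM /= conjcK mulrC.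
Qed.

Lemma ip_self p : ip p p = (Rint (fun z => cabs p.[toC z] ^+ 2))%:C.
Proof.
apply/eqP; rewrite eq_complex /=; apply/andP; split; apply/eqP.
- by under eq_fun do rewrite mulcJ_cabs.
- under eq_fun do rewrite mulcJ_cabs /=.
  by rewrite Rintegral_cst ?mul0r //; exact: measurable_unit_circle.
Qed.

Lemma integrable_sqr_cabs p : mu.-integrable circ (EFin \o (fun z => cabs p.[toC z] ^+ 2)).
Proof.
have := integrable_Re (circ_integrand_ip p p).
by apply: (eq_integrable measurable_unit_circle) => z _ /=; rewrite mulcJ_cabs.
Qed.

Lemma ip_monic_OP n P q : monic_OP mu n P -> (size q <= n)%N -> ip P q = 0.
Proof. by move=> [_ _ /(_ q) oPq] /oPq []; rewrite /ip /cint /Rintegral => -> ->. Qed.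

Lemma le_Rint_ae (N : set T) (g1 g2 : T -> R) : mu.-negligible N ->
  mu.-integrable circ (EFin \o g1) -> mu.-integrable circ (EFin \o g2) ->
  (forall z, circ z -> ~ N z -> g1 z <= g2 z) -> Rint g1 <= Rint g2.
Proof.
move=> [M [mM M0 NM]] i1 i2 g12; have mc := @measurable_unit_circle R.
rewrite /Rintegral !(negligible_integral mM mc _ M0) //.
have mcM : measurable (circ `\` M) by exact: measurableD.
apply: le_Rintegral => //.
- by apply: integrableS i1.
- by apply: integrableS i2.
- by move=> z [cz Mz]; apply: g12 => // /NM.
Qed.

End CircleIntegral.

Lemma Rintegral_gt0 d (X : measurableType d) (R : realType)
    (mu : {measure set X -> \bar R}) (D A : set X) (g : X -> R) (e : R) :
  measurable D -> measurable A -> A `<=` D -> (0 < mu A)%E -> 0 < e ->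
  mu.-integrable D (EFin \o g) -> (forall x, D x -> 0 <= g x) ->
  (forall x, A x -> e <= g x) -> 0 < \int[mu]_(x in D) g x.
Proof.
move=> mD mA AD muA e_gt0 ig g_ge0 eg.
have mg := measurable_int mu ig.
rewrite /Rintegral -lte_fin fineK ?(integrable_fin_num mD ig) //.
apply: lt_le_trans (_ : (0 < e%:E * mu A)%E) _; first by rewrite mule_gt0 ?lte_fin.
rewrite -integral_cst //.
have gD : forall x, D x -> (0 <= (g x)%:E)%E by move=> x /g_ge0; rewrite lee_fin.
apply: le_trans (ge0_subset_integral mu mA mD mg gD AD).
apply: ge0_le_integral => //; first by move=> x _; rewrite lee_fin ltW.
exact: measurable_funS mg.
Qed.

Section Support.
Variable R : realType.
Local Notation T := (R * R)%type.

Definition rat_disk (x : rat * rat * rat) : set T :=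
  [set v | pdist v (ratr x.1.1, ratr x.1.2) < ratr x.2].

Lemma rat_disk_sub_disk (w : T) (r : R) : 0 < r ->
  exists x, rat_disk x w /\ rat_disk x `<=` [set v | pdist v w < r].
Proof.
move=> r_gt0.
have [q1] : exists q : rat, ratr q \in `]w.1 - r / 8, w.1 + r / 8[.
  by apply: rat_in_itvoo; lra.
rewrite in_itv /= => /andP[q1l q1r].
have [q2] : exists q : rat, ratr q \in `]w.2 - r / 8, w.2 + r / 8[.
  by apply: rat_in_itvoo; lra.
rewrite in_itv /= => /andP[q2l q2r].
have [t] : exists t : rat, ratr t \in `]r / 4, r / 2[ by apply: rat_in_itvoo; lra.
rewrite in_itv /= => /andP[tl tr].
have wq : pdist (ratr q1, ratr q2) w < r / 4.
  apply: le_lt_trans (cabs_le_ReIm _) _ => /=.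
  have : `|ratr q1 - w.1| < r / 8 by rewrite ltr_norml; apply/andP; split; lra.
  have : `|ratr q2 - w.2| < r / 8 by rewrite ltr_norml; apply/andP; split; lra.
  lra.
exists (q1, q2, t); split; first by rewrite /rat_disk /= pdistC (lt_trans wq).
move=> v; rewrite /rat_disk /= => vq.
apply: le_lt_trans (pdist_triangle v (ratr q1, ratr q2) w) _; lra.
Qed.

(* Disks with rational centre and radius and measure zero cover the complement of the support. *)
Lemma negligible_not_msupp (mu : {measure set T -> \bar R}) : mu.-negligible (~` msupp mu).
Proof.
pose E k : set T := if unpickle k is Some x then
  (if mu (rat_disk x) == 0 then rat_disk x else set0) else set0.
have mdisk x : measurable (rat_disk x) by exact: measurable_disk.
have E_negl k : mu.-negligible (E k).
  rewrite /E; case: (unpickle k) => [x|]; last exact: negligible_set0.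
  by case: eqP => [/(negligibleP _ (mdisk x))|_] //; exact: negligible_set0.
apply: negligibleS (negligible_bigcup E_negl) => w /= /existsNP[r /not_implyP[r_gt0]].
move=> /negP; rewrite -leNgt measure_le0 => mu_disk0.
have [x [xw xr]] := rat_disk_sub_disk w r_gt0.
exists (pickle x) => [//|]; rewrite /E pickleK.
suff -> : mu (rat_disk x) == 0 by [].
rewrite eq_le measure_ge0 andbT -(eqP mu_disk0) le_measure ?inE //; exact: measurable_disk.
Qed.

Lemma exists_nonroot (h : {poly R[i]}) (s : seq T) : h != 0 -> uniq s ->
  (size h <= size s)%N -> exists2 w, w \in s & h.[toC w] != 0.
Proof.
move=> h_neq0 s_uniq hs; apply: contrapT => noroot.
have : all (root h) (map (@toC R) s).
  apply/allP => _ /mapP[w ws ->]; apply/negPn/negP => hw.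
  exact: noroot (ex_intro2 _ _ w ws hw).
move/(max_poly_roots h_neq0); rewrite (map_inj_uniq (@toC_inj R)) size_map ltnNge.
by rewrite s_uniq hs => /(_ isT).
Qed.

Lemma exists_nonroot_lt_N (S : set T) n (h : {poly R[i]}) : h != 0 -> (size h <= n)%N ->
  lt_N S n -> exists2 w, S w & h.[toC w] != 0.
Proof.
move=> h_neq0 hn [/(infinite_set_fset n)[B BS nB]|[s [s_uniq <- ns]]].
  have [w wB hw] := exists_nonroot h_neq0 (finmap.fset_uniq B) (leq_trans hn nB).
  by exists w => //; exact: BS.
by have [w ws hw] := exists_nonroot h_neq0 s_uniq (leq_trans hn (ltnW ns)); exists w.
Qed.

End Support.

Section ProbabilityOnCircle.
Variable R : realType.
Variable mu : probability (R * R)%type R.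
Hypothesis mu_circle : mu (@unit_circle R) = 1%E.
Local Notation T := (R * R)%type.
Local Notation circ := (@unit_circle R).
Local Notation Rint g := (Rintegral mu circ g).

Lemma measure_not_unit_circle : mu (~` circ) = 0%E.
Proof. by rewrite probability_setC ?mu_circle ?subee //; exact: measurable_unit_circle. Qed.

Lemma measureI_unit_circle (A : set T) : measurable A -> mu (A `&` circ) = mu A.
Proof.
move=> mA; have mc := @measurable_unit_circle R.
have AD0 : mu (A `\` circ) = 0%E.
  apply/eqP; rewrite -measure_le0 -measure_not_unit_circle.
  by rewrite le_measure ?inE //; [exact: measurableD|exact: measurableC].
by rewrite [RHS](measureDI mu mA mc) -[LHS]add0e -AD0.
Qed.

Lemma msupp_unit_circle : msupp mu `<=` circ.
Proof.
move=> z zS; apply: contrapT => zNc.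
have z_neq1 : cabs (toC z) != 1 by apply/eqP => /unit_circleE /zNc.
set r := `|cabs (toC z) - 1|.
have r_gt0 : 0 < r by rewrite normr_gt0 subr_eq0.
suff : (mu [set w | (pdist w z < r)%R] <= 0)%E by rewrite leNgt (zS r r_gt0).
rewrite -measure_not_unit_circle le_measure ?inE //.
- exact: measurable_disk.
- by apply: measurableC; exact: measurable_unit_circle.
- move=> w /= wz /unit_circleE w1.
  by move: wz; rewrite /r -w1 pdistC /pdist ltNge cabs_dist.
Qed.

(* [h] is nonzero at a point [w] of the support, and [h - h(w) = q (X - w)] with [q] bounded
   on the circle keeps [|h|] above [|h(w)|/2] on a disk around [w] of positive measure. *)
Lemma Rint_sqr_cabs_gt0 n (h : {poly R[i]}) : h != 0 -> (size h <= n)%N ->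
  lt_N (msupp mu) n -> 0 < Rint (fun z => cabs h.[toC z] ^+ 2).
Proof.
move=> h_neq0 hn /(exists_nonroot_lt_N h_neq0 hn)[w wS hw].
set c := toC w; set eta := cabs h.[c].
have eta_gt0 : 0 < eta by rewrite lt_def cabs_eq0 hw cabs_ge0.
have [q hq] : exists q, h - h.[c]%:P = q * ('X - c%:P).
  by apply/factor_theorem; rewrite /root !hornerE subrr.
have [_ _ [M qM]] := circ_integrand_horner q.
set del := eta / (2 * (`|M| + 1)).
have h_near z : circ z -> pdist z w < del -> eta / 2 <= cabs h.[toC z].
  move=> cz zw.
  have hqz : cabs (h.[toC z] - h.[c]) = cabs q.[toC z] * pdist z w.
    by rewrite /pdist -cabsM -[toC z - c]hornerXsubC -hornerM -hq !hornerE.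
  have : cabs q.[toC z] * pdist z w <= `|M| * del.
    apply: ler_pM; [exact: cabs_ge0|exact: pdist_ge0| |exact: ltW].
    exact: le_trans (qM z cz) (ler_norm M).
  have : `|M| * del <= eta / 2.
    by rewrite /del mulrA ler_pdivrMr ?mulr_gt0 ?ltr_pwDr //; nra.
  have := cabsD (h.[c] - h.[toC z]) h.[toC z]; rewrite subrK cabsB hqz -/eta.
  lra.
have D_gt0 : (0 < mu ([set z | (pdist z w < del)%R] `&` circ))%E.
  rewrite measureI_unit_circle; last exact: measurable_disk.
  by apply: wS; rewrite divr_gt0 // mulr_gt0 // ltr_pwDr.
have mD : measurable ([set z | (pdist z w < del)%R] `&` circ).
  by apply: measurableI; [exact: measurable_disk|exact: measurable_unit_circle].
apply: (Rintegral_gt0 (e := eta ^+ 2 / 4) measurable_unit_circle mD (@subIsetr _ _ _) D_gt0 _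
  (integrable_sqr_cabs _ h)).
- by rewrite divr_gt0 // exprn_gt0.
- by move=> z _; exact: sqr_ge0.
- move=> z [zw cz]; have := h_near z cz zw; have := cabs_ge0 h.[toC z].
  nra.
Qed.

End ProbabilityOnCircle.

Section ShiftOperator.
Variable R : realType.
Variable mu : probability (R * R)%type R.
Hypothesis mu_circle : mu (@unit_circle R) = 1%E.
Variable z0 : R * R.
Hypothesis z0_circle : unit_circle z0.
Local Notation Re := (@complex.Re R).
Local Notation circ := (@unit_circle R).
Local Notation Rint g := (Rintegral mu circ g).
Local Notation c := (toC z0).
Local Notation U := ('X - c%:P).
Local Notation d := (dist_rest (msupp mu) z0).
Local Notation ip := (ip mu).

Lemma Re_shift_integrand f z :
  Re (c^* * ((U * f).[toC z] * f.[toC z]^*)) = Re (c^* * (toC z - c)) * cabs f.[toC z] ^+ 2.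
Proof. by rewrite hornerM hornerXsubC -mulrA mulcJ_cabs mulrA Re_mul_real. Qed.

Lemma integrable_shift f :
  mu.-integrable circ (EFin \o (fun z => Re (c^* * (toC z - c)) * cabs f.[toC z] ^+ 2)).
Proof.
have := integrable_Re mu (circ_integrandM (circ_integrand_cst c^*) (circ_integrand_ip (U * f) f)).
by apply: (eq_integrable measurable_unit_circle) => z _ /=; rewrite Re_shift_integrand.
Qed.

Lemma Re_ip_shift f :
  Re (c^* * ip (U * f) f) = Rint (fun z => Re (c^* * (toC z - c)) * cabs f.[toC z] ^+ 2).
Proof.
rewrite -(cintZ mu c^* (circ_integrand_ip (U * f) f)) /=.
by apply: eq_Rintegral => z _; rewrite Re_shift_integrand.
Qed.

Lemma Re_ip_shift_le0 f : Re (c^* * ip (U * f) f) <= 0.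
Proof.
rewrite Re_ip_shift -oppr_ge0 -mulN1r -RintegralZl ?integrable_shift //;
  last exact: measurable_unit_circle.
apply: Rintegral_ge0 => z cz; rewrite Re_conj_sub_unit_circle // mulN1r mulNr opprK.
by rewrite mulr_ge0 ?divr_ge0 ?sqr_ge0.
Qed.

(* Off the support the integrand is irrelevant; on it, [z = z0] or [|z - z0| >= d]. *)
Lemma Re_ip_shift_vanishing r :
  Re (c^* * ip (U * (U * r)) (U * r)) <= - (d ^+ 2 / 2) * Rint (fun z => cabs (U * r).[toC z] ^+ 2).
Proof.
rewrite Re_ip_shift -RintegralZl ?integrable_sqr_cabs //; last exact: measurable_unit_circle.
apply: (le_Rint_ae (negligible_not_msupp mu) (integrable_shift _)).
  exact/integrable_scale/integrable_sqr_cabs.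
move=> z cz /contrapT zS; rewrite Re_conj_sub_unit_circle // hornerM hornerXsubC cabsM exprMn.
rewrite -/(pdist z z0); have r2_ge0 := sqr_ge0 (cabs r.[toC z]).
have [->|zz0] := eqVneq z z0.
  by rewrite (_ : pdist z0 z0 = 0) ?expr0n /= ?mul0r ?mulr0 //; apply/eqP; rewrite cabs_eq0 subrr.
have dz : d ^+ 2 <= pdist z z0 ^+ 2.
  by rewrite ler_pXn2r ?nnegrE ?dist_rest_ge0 ?pdist_ge0 // dist_rest_le //; exact/eqP.
have := mulr_ge0 (sqr_ge0 (pdist z z0)) r2_ge0; nra.
Qed.

Variables (n : nat) (P : {poly R[i]}).
Hypotheses (ltNn : lt_N (msupp mu) n) (OP : monic_OP mu n P).

Lemma shift_factor_identity r (al be : R[i]) : P = r * ((U - al%:P) * (U - be%:P)) ->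
  U * (U * r) = P + (al + be)%:P * (U * r) - (al * be)%:P * r.
Proof. by move=> ->; rewrite polyCD polyCM; ring. Qed.

(* Project [r] orthogonally to [e = U r] and apply [Re_ip_shift_le0] to the remainder [w]. *)
Lemma Re_cross_le0 r (al be : R[i]) : P = r * ((U - al%:P) * (U - be%:P)) -> r != 0 ->
  (size (U * r)%R <= n)%N -> Re (c^* * (al * be) * ip r (U * r)) <= 0.
Proof.
move=> Pr r_neq0 sUr; set e := U * r.
have e_neq0 : e != 0 by rewrite mulf_neq0 ?polyXsubC_eq0.
have sr : (size r <= n)%N.
  by apply: leq_trans sUr; rewrite size_mul ?polyXsubC_eq0 // size_XsubC.
set G := Rint (fun z => cabs e.[toC z] ^+ 2).
have G_gt0 : 0 < G := Rint_sqr_cabs_gt0 mu_circle e_neq0 sUr ltNn.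
have G_neq0 : G%:C != 0 by apply/eqP => /complexI /eqP; rewrite gt_eqF.
set s := ip r e / G%:C; set w := r - s%:P * e.
have sw : (size w <= n)%N.
  apply: leq_trans (size_polyD _ _) _; rewrite size_polyN geq_max sr mul_polyC.
  exact: leq_trans (size_scale_leq _ _) sUr.
have w_neq0 : w != 0.
  rewrite (_ : w = (1 - s%:P * U) * r); last by rewrite /w /e; ring.
  rewrite mulf_neq0 //; apply/negP => /eqP /(congr1 (horner^~ c)) /eqP.
  by rewrite !hornerE subrr mulr0 subr0 oner_eq0.
have we : ip w e = 0 by rewrite ipBl ipZl ip_self divfK // subrr.
have ew : ip e w = 0 by rewrite ipC we conjc0.
have rw : ip r w = ip w w by rewrite -{1}(subrK (s%:P * e) r) -/w ipDl ipZl ew mulr0 addr0.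
have Uww : ip (U * w) w = s * (al * be) * ip w w.
  rewrite (_ : U * w = e - s%:P * (U * e)); last by rewrite /w /e; ring.
  rewrite ipBl ipZl ew (shift_factor_identity Pr) ipBl ipDl (ip_monic_OP OP sw).
  by rewrite !ipZl ew rw; ring.
have := Re_ip_shift_le0 w; rewrite Uww ip_self.
have -> : c^* * (s * (al * be) * (Rint (fun z => cabs w.[toC z] ^+ 2))%:C) =
    c^* * (al * be) * ip r e * (Rint (fun z => cabs w.[toC z] ^+ 2) / G)%:C.
  by rewrite /s rmorphM fmorphV /=; ring.
by rewrite Re_mul_real pmulr_lle0 // divr_gt0 // (Rint_sqr_cabs_gt0 mu_circle w_neq0 sw ltNn).
Qed.

Lemma monic_OP_no_close_root_pair (a b : R[i]) :
  cabs (a - c) < d ^+ 2 / 4 -> cabs (b - c) < d ^+ 2 / 4 ->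
  ~~ (('X - a%:P) * ('X - b%:P) %| P).
Proof.
move=> ha hb; apply/negP => /dvdpP[r Pr].
have P_neq0 : P != 0 by case: OP => /monic_neq0.
have r_neq0 : r != 0 by apply: contraNneq P_neq0 => r0; rewrite Pr r0 mul0r.
have sUr : size (U * r) = n.
  case: OP => _ + _; rewrite Pr !size_mul ?mulf_neq0 ?polyXsubC_eq0 // !size_XsubC.
  by move=> ?; lia.
set al := a - c; set be := b - c.
have {}Pr : P = r * ((U - al%:P) * (U - be%:P)).
  by rewrite Pr /al /be !polyCB; congr (_ * (_ * _)); ring.
set e := U * r; set G := Rint (fun z => cabs e.[toC z] ^+ 2).
have G_gt0 : 0 < G.
  by apply: (Rint_sqr_cabs_gt0 mu_circle _ (eq_leq sUr) ltNn); rewrite mulf_neq0 ?polyXsubC_eq0.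
have ipUe : ip (U * e) e = (al + be) * G%:C - al * be * ip r e.
  rewrite (shift_factor_identity Pr) ipBl ipDl (ip_monic_OP OP (eq_leq sUr)) add0r.
  by rewrite !ipZl ip_self.
have upper := Re_ip_shift_vanishing r; rewrite -/e -/G ipUe in upper.
have cross := Re_cross_le0 Pr r_neq0 (eq_leq sUr); rewrite -/e in cross.
have lower : - (cabs al + cabs be) <= Re (c^* * (al + be)).
  have := Re_le_cabs (c^* * (al + be)); rewrite ler_norml cabsM cabsJ.
  rewrite (unit_circleE z0).1 // mul1r => /andP[+ _]; apply: le_trans.
  by rewrite lerN2 cabsD.
have t_gt : 0 < Re (c^* * (al + be)) + d ^+ 2 / 2 by lra.
move: upper; rewrite mulrBr Re_subc mulrA Re_mul_real mulrA.
have := mulr_gt0 t_gt G_gt0; nra.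
Qed.

End ShiftOperator.

Theorem theoremA2p5 (R : realType) (mu : probability (R * R)%type R)
  (z0 : R * R) (n : nat) (P : {poly R[i]}) :
  mu (@unit_circle R) = 1%E ->
  isolated_pt (msupp mu) z0 ->
  lt_N (msupp mu) n ->
  monic_OP mu n P ->
  let d := dist_rest (msupp mu) z0 in
  forall a b : R[i],
    cabs (a - toC z0) < d ^+ 2 / 4 ->
    cabs (b - toC z0) < d ^+ 2 / 4 ->
    ~~ (('X - a%:P) * ('X - b%:P) %| P).
Proof.
move=> mu_circle [z0S _] ltNn OP.
exact: (monic_OP_no_close_root_pair mu_circle (msupp_unit_circle mu_circle z0S) ltNn OP).
Qed.
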